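(* Let $k\le l$ be positive integers with $\gcd(k,l)=1$, let $n\ge1$ and $q\ge 0$ be integers, and let $m=qn$ (i.e. the remainder of $m$ modulo $n$ is $r=0$). Then $L^{k,l}(m,n)=nkq$, and this value is attained at the $nk\times nl$ matrix all of whose entries equal $q$.
   Context: $\mathcal D^{k,l}(m,n)$ denotes the set of all $nk\times nl$ matrices with nonnegative integer entries all of whose row sums equal $ml$ and all of whose column sums equal $mk$. For an $s\times t$ matrix $A=(a_{ij})$ with $s\le t$, a transversal of $A$ is a set of entries $T=\{a_{1i_1},\dots,a_{si_s}\}$ with $i_1,\dots,i_s\in\{1,\dots,t\}$ pairwise distinct, and $|T|=a_{1i_1}+\cdots+a_{si_s}$; if $s>t$, the transversals of $A$ are those of its transpose. The tropical determinant is ${\rm tdet}(A)=\max_T|T|$, and $L^{k,l}(m,n)=\min_{A\in\mathcal D^{k,l}(m,n)}{\rm tdet}(A)$. *)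

From mathcomp Require Import all_boot all_order all_algebra.
Set Implicit Arguments. Unset Strict Implicit. Unset Printing Implicit Defensive.

Definition inD (k l m n : nat) (A : 'M[nat]_(n * k, n * l)) : Prop :=
  (forall i, \sum_(j < n * l) A i j = m * l) /\
  (forall j, \sum_(i < n * k) A i j = m * k).
Arguments inD : clear implicits.

Definition tdet (s t : nat) (A : 'M[nat]_(s, t)) : nat :=
  if s <= t then
    \max_(f : {ffun 'I_s -> 'I_t} | injectiveb f) \sum_(i < s) A i (f i)
  else
    \max_(g : {ffun 'I_t -> 'I_s} | injectiveb g) \sum_(j < t) A (g j) j.
Arguments tdet {s t} A.

Definition L_is (k l m n v : nat) : Prop :=
  (exists A : 'M[nat]_(n * k, n * l), inD k l m n A /\ tdet A = v) /\
  (forall A : 'M[nat]_(n * k, n * l), inD k l m n A -> v <= tdet A).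

(* Every matrix of D^{k,l}(m,n) with m = qn has row sums qnl over nl columns.
   Averaging a transversal over the nl cyclic shifts [i |-> i + t mod nl]
   covers every entry exactly once, so some shift has weight at least
   nk * qnl / nl = nkq; the constant matrix q attains this bound. *)

From mathcomp Require Import all_boot all_order all_algebra.
From mathcomp Require Import ring.

Set Implicit Arguments.
Unset Strict Implicit.
Unset Printing Implicit Defensive.

Lemma sum_const_mx_row s t (q : nat) (i : 'I_s) :
  \sum_(j < t) (const_mx q : 'M[nat]_(s, t)) i j = t * q.
Proof. by under eq_bigr do rewrite mxE; rewrite sum_nat_const card_ord. Qed.

Lemma sum_const_mx_col s t (q : nat) (j : 'I_t) :
  \sum_(i < s) (const_mx q : 'M[nat]_(s, t)) i j = s * q.
Proof. by under eq_bigr do rewrite mxE; rewrite sum_nat_const card_ord. Qed.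

Lemma inD_const_mx k l n q :
  inD k l (q * n) n (const_mx q : 'M[nat]_(n * k, n * l)).
Proof.
by split=> [i|j]; rewrite ?sum_const_mx_row ?sum_const_mx_col mulnC mulnA.
Qed.

Lemma bigmax_injective_const s t c : s <= t ->
  \max_(f : {ffun 'I_s -> 'I_t} | injectiveb f) \sum_(i < s) c = s * c.
Proof.
move=> le_st; rewrite sum_nat_const card_ord.
apply/eqP; rewrite eqn_leq; apply/andP; split.
  by apply/bigmax_leqP.
have widen_inj : injectiveb [ffun i : 'I_s => widen_ord le_st i].
  by apply/injectiveP => i j; rewrite !ffunE => /(congr1 val) /= /val_inj.
exact: (leq_bigmax_cond _ widen_inj).
Qed.

Lemma tdet_const_mx s t (q : nat) :
  tdet (const_mx q : 'M[nat]_(s, t)) = minn s t * q.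
Proof.
rewrite /tdet; case: leqP => [le_st|/ltnW le_ts].
- under eq_bigr do under eq_bigr do rewrite mxE.
  exact: bigmax_injective_const.
- under eq_bigr do under eq_bigr do rewrite mxE.
  exact: bigmax_injective_const.
Qed.

Section CyclicShift.

Variable N : nat.
Hypothesis N_gt0 : 0 < N.

Definition addmod_ord (i : nat) (t : 'I_N) : 'I_N :=
  Ordinal (ltn_pmod (i + t) N_gt0).

Lemma addmod_ord_injl i i' t : i < N -> i' < N ->
  addmod_ord i t = addmod_ord i' t -> i = i'.
Proof.
move=> lt_iN lt_i'N /(congr1 val) /= /eqP.
by rewrite eqn_modDr !modn_small // => /eqP.
Qed.

Lemma addmod_ord_injr i : injective (addmod_ord i).
Proof.
move=> t t' /(congr1 val) /= /eqP.
by rewrite eqn_modDl !modn_small // => /eqP /val_inj.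
Qed.

Lemma sum_addmod_ord (F : 'I_N -> nat) i :
  \sum_(t < N) F (addmod_ord i t) = \sum_(j < N) F j.
Proof. by rewrite [RHS](reindex_inj (@addmod_ord_injr i)). Qed.

Variable s : nat.
Hypothesis le_sN : s <= N.

Definition shift_ffun (t : 'I_N) : {ffun 'I_s -> 'I_N} :=
  [ffun i : 'I_s => addmod_ord i t].

Lemma shift_ffun_injective t : injectiveb (shift_ffun t).
Proof.
apply/injectiveP => i i'; rewrite !ffunE => /addmod_ord_injl eq_ii'.
by apply/val_inj/eq_ii'; apply: leq_trans le_sN.
Qed.

Lemma tdet_row_sum_bound (A : 'M[nat]_(s, N)) c :
  (forall i, \sum_(j < N) A i j = c) -> s * c <= N * tdet A.
Proof.
move=> row_sum.
have -> : s * c = \sum_(t < N) \sum_(i < s) A i (shift_ffun t i).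
  rewrite exchange_big -[s in s * c]card_ord -sum_nat_const /=.
  apply: eq_bigr => i _; rewrite -(row_sum i) -(sum_addmod_ord _ i).
  by apply: eq_bigr => t _; rewrite ffunE.
rewrite /tdet le_sN -[N in N * _]card_ord -sum_nat_const.
apply: leq_sum => t _.
exact: (leq_bigmax_cond _ (shift_ffun_injective t)).
Qed.

End CyclicShift.

Theorem corollary4p1 (k l n q m : nat) :
  0 < k -> k <= l -> coprime k l -> 0 < n -> m = q * n ->
  L_is k l m n (n * k * q) /\
  inD k l m n (const_mx q : 'M[nat]_(n * k, n * l)) /\
  tdet (const_mx q : 'M[nat]_(n * k, n * l)) = n * k * q.
Proof.
move=> k_gt0 le_kl _ n_gt0 ->.
have nl_gt0 : 0 < n * l by rewrite muln_gt0 n_gt0 (leq_trans k_gt0 le_kl).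
have le_nk_nl : n * k <= n * l by rewrite leq_mul2l le_kl orbT.
have tdet_const : tdet (const_mx q : 'M[nat]_(n * k, n * l)) = n * k * q.
  by rewrite tdet_const_mx (minn_idPl le_nk_nl).
split; [split | by split; [exact: inD_const_mx | exact: tdet_const]].
  by exists (const_mx q); split; [exact: inD_const_mx | exact: tdet_const].
move=> A [row_sum _].
have := tdet_row_sum_bound nl_gt0 le_nk_nl row_sum.
have -> : n * k * (q * n * l) = n * l * (n * k * q) by ring.
by rewrite leq_pmul2l.
Qed.
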